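(* If $G$ is a $2$-connected graph of order $n$ with girth $g$, then $F_c(G)\le n-g+2$.
   Context: Forcing process: given a set of initially colored vertices, at each step a colored vertex with exactly one non-colored neighbor forces (colors) that neighbor. A set $S\subseteq V(G)$ is a forcing set if iterating this process from $S$ eventually colors all vertices; it is a connected forcing set if moreover the induced subgraph $G[S]$ is connected. $F_c(G)$ is the minimum cardinality of a connected forcing set of $G$. The girth of $G$ is the length of a shortest cycle in $G$. *)

From mathcomp Require Import all_boot.
Set Implicit Arguments. Unset Strict Implicit. Unset Printing Implicit Defensive.

Definition simple_graph (T : finType) (e : rel T) : Prop :=
  symmetric e /\ irreflexive e.

Definition induced (T : finType) (e : rel T) (S : {set T}) : rel T :=
  [rel x y | [&& x \in S, y \in S & e x y]].

Definition connected_on (T : finType) (e : rel T) (S : {set T}) : Prop :=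
  forall x y, x \in S -> y \in S -> connect (induced e S) x y.

Definition connected_graph (T : finType) (e : rel T) : Prop :=
  connected_on e [set: T].

Definition two_connected (T : finType) (e : rel T) : Prop :=
  [/\ 3 <= #|T|, connected_graph e & forall v : T, connected_on e [set~ v]].

Definition is_cycle (T : finType) (e : rel T) (s : seq T) : Prop :=
  [/\ 3 <= size s, uniq s & cycle e s].

Definition is_girth (T : finType) (e : rel T) (g : nat) : Prop :=
  (exists s, is_cycle e s /\ size s = g) /\
  (forall s, is_cycle e s -> g <= size s).

Definition force_step (T : finType) (e : rel T) (S : {set T}) : {set T} :=
  S :|: [set v | [exists u, [&& u \in S, v \notin S, e u v &
                  [forall w, e u w ==> (w \in S) || (w == v)]]]].

(* the final colored set (the process stabilises after at most #|T| rounds) *)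
Definition closure (T : finType) (e : rel T) (S : {set T}) : {set T} :=
  iter #|T| (force_step e) S.

Definition forcing_set (T : finType) (e : rel T) (S : {set T}) : Prop :=
  closure e S = [set: T].

Definition connected_forcing_set (T : finType) (e : rel T) (S : {set T}) : Prop :=
  forcing_set e S /\ connected_on e S.

From mathcomp Require Import all_boot zify.
Set Implicit Arguments. Unset Strict Implicit. Unset Printing Implicit Defensive.

(* Choose W with |W| = g - 2 such that both G[W] and G - W are connected; such
   sets of every size 1 <= k < n exist because a connected set Y with |Y| >= 2
   and nonempty complement in a 2-connected graph contains a vertex z with a
   neighbor outside Y such that Y - z is still connected (apply this to
   Y = V - W and move z into W).  Then S = V - W is a connected forcing set.
   A vertex outside W has at most one neighbor in W, since two would close a
   cycle of length <= |W| + 1 < g.  Hence if forcing stalled on some colored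
   set containing S, the uncolored vertices together with the colored ones
   having an uncolored neighbor would induce a subgraph of G[W] of minimum
   degree 2, which contains a cycle of length <= |W| < g. *)

Section InducedConnectivity.
Variables (T : finType) (e : rel T).
Implicit Types (A B : {set T}) (x y z : T).

Lemma connect_induced_mem A x y : x \in A -> connect (induced e A) x y -> y \in A.
Proof.
move=> xA /connectP [p pth ->]; elim: p x xA pth => //= z p IH x _.
by case/andP=> /and3P [_ zA _]; apply: IH.
Qed.

Lemma connect_induced_sub A B x y :
  A \subset B -> connect (induced e A) x y -> connect (induced e B) x y.
Proof.
move=> /subsetP AB; apply: connect_sub => u v /and3P [uA vA uv].
by apply: connect1; rewrite /induced /= uv !AB.
Qed.

Lemma connect_induced_setD1 A x y z :
  ~~ connect (induced e A) x z -> connect (induced e A) x y ->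
  connect (induced e (A :\ z)) x y.
Proof.
move=> nxz /connectP [p pth ->].
elim: p x nxz pth => //= u p IH x nxz /andP [xu pth].
have nuz : ~~ connect (induced e A) u z.
  by apply: contra nxz; apply: connect_trans (connect1 xu).
case/and3P: xu => xA uA xu.
have xz : x != z by apply: contraNneq nxz => ->.
have uz : u != z by apply: contraNneq nuz => ->.
apply: connect_trans (connect1 _) (IH u nuz pth).
by rewrite /induced /= !inE xz uz xA uA.
Qed.

Lemma connect_neighbor A x y :
  x != y -> connect (induced e A) x y -> exists2 a, a \in A & e x a.
Proof.
move=> xy /connectP [[|a p] /= pth yE]; first by rewrite yE eqxx in xy.
by case/andP: pth => /and3P [_ aA xa] _; exists a.
Qed.

Lemma connect_exit_edge (r : rel T) (C : {pred T}) x y :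
  x \in C -> y \notin C -> connect r x y -> exists u v, [/\ u \in C, v \notin C & r u v].
Proof.
move=> xC yC /connectP [p pth yE]; rewrite {y}yE in yC.
elim: p x xC pth yC => [|z p IH] x xC /=; first by rewrite xC.
case/andP=> xz pth yC; have [zC|zC] := boolP (z \in C); first exact: IH pth yC.
by exists x, z.
Qed.

Hypothesis esym : symmetric e.

Lemma connect_induced_sym A : connect_sym (induced e A).
Proof. by apply: sym_connect_sym => x y; rewrite /induced /= esym andbCA. Qed.

Lemma connected_on_hub A z : z \in A ->
  (forall y, y \in A -> connect (induced e A) y z) -> connected_on e A.
Proof.
move=> zA hub x y xA yA.
by apply: connect_trans (hub x xA) _; rewrite connect_induced_sym hub.
Qed.

End InducedConnectivity.

Lemma card_gt2_notin2 (T : finType) (a b : T) :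
  2 < #|T| -> exists w, w \notin [set a; b].
Proof.
move=> n3; apply/existsP; rewrite -negb_forall; apply/negP => /forallP all2.
have : [set: T] \subset [set a; b] by apply/subsetP => w _; rewrite all2.
by move/subset_leq_card; rewrite cardsT cards2; lia.
Qed.

Section TwoConnected.
Variables (T : finType) (e : rel T).
Hypotheses (esym : symmetric e) (eirr : irreflexive e) (two : two_connected e).
Implicit Types (Y W : {set T}) (x y z : T).

Lemma two_connected_deg2 v : exists a b, [/\ a != b, e v a & e v b].
Proof.
case: two => n3 conn cut.
have [w] := card_gt2_notin2 v v n3; rewrite !inE orbb eq_sym => vw.
have [a _ va] := connect_neighbor vw (conn v w (in_setT v) (in_setT w)).
have [w'] := card_gt2_notin2 v a n3; rewrite !inE negb_or eq_sym => /andP [vw' aw'].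
have av : v != a by apply: contraTneq va => <-; rewrite eirr.
have vna : v \in [set~ a] by rewrite !inE.
have w'na : w' \in [set~ a] by rewrite !inE.
have [b] := connect_neighbor vw' (cut a v w' vna w'na).
by rewrite !inE eq_sym => ab vb; exists a, b.
Qed.

Definition cut_component Y z x := [set y | connect (induced e (Y :\ z)) x y].

Lemma cut_component_sub Y z x y :
  x \in Y :\ z -> y \in cut_component Y z x -> y \in Y :\ z.
Proof. by move=> xY; rewrite inE; apply: connect_induced_mem. Qed.

Lemma cut_component_exit Y z x w : z \in Y -> x \in Y :\ z -> w \notin Y ->
  exists2 z', z' \in cut_component Y z x & exists2 w', w' \notin Y & e z' w'.
Proof.
move=> zY xY wY; case: two => _ _ cut.
have xz : x \in [set~ z] by case/setD1P: xY; rewrite !inE.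
have wz : w \in [set~ z] by rewrite !inE; apply: contraNneq wY => ->.
have xC : x \in cut_component Y z x by rewrite inE connect0.
have wC : w \notin cut_component Y z x.
  by apply: contra wY => /(cut_component_sub xY) /setD1P [].
have [u [v [uC vC /and3P [_ vz uv]]]] := connect_exit_edge xC wC (cut z x w xz wz).
exists u => //; exists v => //; apply: contra vC => vY.
move: (uC); rewrite !inE => xu; apply: connect_trans xu (connect1 _).
move: (cut_component_sub xY uC) vz; rewrite /induced /= !inE => /andP [-> ->] ->.
by rewrite vY uv.
Qed.

Lemma cut_component_proper Y z x z' y :
  connected_on e Y -> z \in Y -> x \in Y :\ z -> z' \in cut_component Y z x ->
  y \in Y :\ z' -> ~~ connect (induced e (Y :\ z')) y z ->
  cut_component Y z' y \proper cut_component Y z x.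
Proof.
move=> cY zY xY z'C yY nyz.
have z'Y := cut_component_sub xY z'C.
have yz_path t : t \in cut_component Y z' y -> connect (induced e (Y :\ z)) y t.
  rewrite inE => /(connect_induced_setD1 nyz); apply: connect_induced_sub.
  by apply/subsetP => u; rewrite !inE => /and3P [-> _ ->].
have yD : y \in cut_component Y z' y by rewrite inE connect0.
have yC : y \in cut_component Y z x.
  have zD : z \notin cut_component Y z' y by rewrite inE.
  have [|u [v [uD vD /and3P [_ vY uv]]]] := connect_exit_edge yD zD (cY y z _ zY).
    by case/setD1P: yY.
  have uY := cut_component_sub yY uD.
  have vz' : v = z'.
    apply: contraNeq vD => vz'; move: (uD); rewrite !inE => yu.
    by apply: connect_trans yu (connect1 _); rewrite /induced /= uY !inE vz' vY.
  have uYz : u \in Y :\ z.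
    by rewrite !inE (setD1P uY).2 andbT; apply: contraNneq zD => <-.
  rewrite inE; apply: connect_trans (_ : connect _ x u) _.
    move: z'C; rewrite inE => xz'; apply: connect_trans xz' (connect1 _).
    by rewrite /induced /= z'Y uYz esym -vz'.
  by rewrite connect_induced_sym //; apply: yz_path.
apply/properP; split.
  apply/subsetP => t /yz_path yt.
  by move: yC; rewrite !inE => xy; apply: connect_trans yt.
by exists z' => //; apply/negP => /(cut_component_sub yY); rewrite !inE eqxx.
Qed.

Lemma removable_vertex Y w : connected_on e Y -> w \notin Y -> 1 < #|Y| ->
  exists z, [/\ z \in Y, exists2 w', w' \notin Y & e z w' & connected_on e (Y :\ z)].
Proof.
move=> cY wY Y2.
have [z0 z0Y] : exists z, z \in Y by apply/set0Pn; rewrite -card_gt0; lia.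
have [x0 x0Y] : exists x, x \in Y :\ z0.
  by apply/set0Pn; rewrite -card_gt0; move: Y2; rewrite (cardsD1 z0) z0Y; lia.
(* Minimize the component of x in G[Y] - z over all admissible pairs (z, x). *)
pose P (zx : T * T) := (zx.1 \in Y) && (zx.2 \in Y :\ zx.1).
have P0 : P (z0, x0) by rewrite /P /= z0Y.
case: (arg_minnP (fun zx => #|cut_component Y zx.1 zx.2|) P0) => -[z x].
case/andP=> /= zY xY min_zx.
have [z' z'C [w' w'Y zw']] := cut_component_exit zY xY wY.
have z'Y := cut_component_sub xY z'C.
have zY' : z \in Y :\ z' by rewrite !inE zY andbT eq_sym; case/setD1P: z'Y.
exists z'; split; [by case/setD1P: z'Y | by exists w' |].
apply: (connected_on_hub esym zY') => y yY; apply/negPn/negP => nyz.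
have := proper_card (cut_component_proper cY zY xY z'C yY nyz).
by rewrite ltnNge (min_zx (z', y)) // /P /= yY andbT; case/setD1P: z'Y.
Qed.

Lemma connected_bipartition k : 0 < k < #|T| ->
  exists W : {set T}, [/\ #|W| = k, connected_on e W & connected_on e (~: W)].
Proof.
case: two => n3 _ cut.
elim: k => [//|[|k] IH /andP [_ lt]].
  have [v _] : exists v, v \in [set: T] by apply/set0Pn; rewrite -card_gt0 cardsT; lia.
  exists [set v]; split; [exact: cards1 | | exact: cut].
  by move=> x y /set1P -> /set1P ->.
have [|W [cW conW conC]] := IH; first by rewrite /= ltnW.
have [w0 w0W] : exists w, w \in W by apply/set0Pn; rewrite -card_gt0 cW.
have [||z [zW [w wW zw] conZ]] := removable_vertex conC (w := w0).
- by rewrite inE negbK.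
- by have := cardsC W; lia.
rewrite inE in zW; rewrite inE negbK in wW.
exists (z |: W); split.
- by rewrite cardsU1 zW cW.
- apply: (connected_on_hub esym (setU1r z wW)) => y /setU1P [-> | yW].
    by apply: connect1; rewrite /induced /= setU11 setU1r.
  by apply: connect_induced_sub (conW y w yW wW); apply: subsetUr.
- by rewrite setCU setIC -setDE.
Qed.

End TwoConnected.

Section Cycles.
Variables (T : finType) (e : rel T).
Hypotheses (esym : symmetric e) (eirr : irreflexive e).

Lemma cycle_size_le_card (A : {set T}) s :
  is_cycle e s -> {subset s <= A} -> size s <= #|A|.
Proof. by case=> _ us _ sA; rewrite -(card_uniqP us); apply/subset_leq_card/subsetP. Qed.

Lemma chord_cycle x p1 c p2 d :
  path e x (p1 ++ c :: p2) -> uniq (x :: p1 ++ c :: p2) -> e x c -> d \in p1 ->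
  is_cycle e (x :: rcons p1 c).
Proof.
move=> pth up xc dp; split.
- by case: p1 {pth up} dp => //= ? ?; rewrite size_rcons.
- have : uniq ((x :: rcons p1 c) ++ p2) by rewrite cat_cons cat_rcons.
  by rewrite cat_uniq => /andP [].
- rewrite /cycle rcons_path last_rcons esym xc andbT rcons_path.
  by move: pth; rewrite cat_path /= => /and3P [-> -> _].
Qed.

Lemma min_degree2_cycle (F : {set T}) x0 : x0 \in F ->
  (forall y, y \in F -> exists a b, [/\ a \in F, b \in F, a != b, e y a & e y b]) ->
  exists s, is_cycle e s /\ {subset s <= F}.
Proof.
move=> x0F deg.
pose long_path m := exists x p,
  [/\ {subset x :: p <= F}, uniq (x :: p), path e x p & size p = m].
suff /(_ #|F|) [//|[x [p [pF up _ sz]]]] :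
    forall m, (exists s, is_cycle e s /\ {subset s <= F}) \/ long_path m.
  by have := subset_leq_card (introT subsetP pF); rewrite (card_uniqP up) /= sz ltnn.
elim=> [|m [|[x [p [pF up pth sz]]]]]; [|by left|].
  by right; exists x0, [::]; split=> // u /[1!inE] /eqP ->.
have [a [b [aF bF ab xa xb]]] := deg x (pF x (mem_head x p)).
have in_tail u : e x u -> u \in x :: p -> u \in p.
  by move=> xu /predU1P [ux|//]; rewrite ux eirr in xu.
have [[c [cF xc cp]] | [ap bp]] :
    (exists c, [/\ c \in F, e x c & c \notin x :: p]) \/ (a \in p /\ b \in p).
- have [/(in_tail a xa) ap|] := boolP (a \in x :: p); last by left; exists a.
  have [/(in_tail b xb) bp|] := boolP (b \in x :: p); last by left; exists b.
  by right.
- right; exists c, (x :: p); split.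
  + by move=> u /predU1P [-> //|/pF].
  + by rewrite cons_uniq cp.
  + by rewrite /= esym xc.
  + by rewrite /= sz.
left; move: pF up pth bp; case/splitPr: ap => p1 p2 pF up pth.
rewrite mem_cat inE eq_sym (negbTE ab) /= => /orP [bp1|bp2].
  exists (x :: rcons p1 a); split; first exact: chord_cycle pth up xa bp1.
  by move=> u ua; apply: pF; rewrite -cat_rcons -cat_cons mem_cat ua.
move: pF up pth; case/splitPr: bp2 => q1 q2; rewrite -(cat_cons a q1) catA => pF up pth.
have ap : a \in p1 ++ a :: q1 by rewrite mem_cat mem_head orbT.
exists (x :: rcons (p1 ++ a :: q1) b); split; first exact: chord_cycle pth up xb ap.
by move=> u ua; apply: pF; rewrite -cat_rcons -cat_cons mem_cat ua.
Qed.

Lemma outer_vertex_cycle (W : {set T}) x a b : connected_on e W -> x \notin W ->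
  a \in W -> b \in W -> a != b -> e x a -> e x b ->
  exists s, is_cycle e s /\ {subset s <= x |: W}.
Proof.
move=> cW xW aW bW ab xa xb.
have /connectP [p pth bE] := cW a b aW bW.
case: (shortenP pth) bE => p' pth' up' _ bE.
have p'W : {subset a :: p' <= W}.
  by move=> u /(path_connect pth'); apply: connect_induced_mem.
exists (x :: a :: p'); split; last first.
  by move=> u /predU1P [->|/p'W uW]; rewrite !inE ?eqxx ?uW ?orbT.
split.
- by case: p' {pth' up' p'W} bE => [/= ba|]; first by rewrite ba eqxx in ab.
- by rewrite cons_uniq up' andbT; apply: contra xW => /p'W.
- rewrite /cycle /= xa rcons_path -bE esym xb andbT.
  by apply: sub_path pth' => u v /and3P [].
Qed.

End Cycles.

Section Forcing.
Variables (T : finType) (e : rel T).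
Implicit Types (S X : {set T}).

Lemma iter_proper_setT (f : {set T} -> {set T}) S :
  (forall X, X \subset f X) -> (forall X, S \subset X -> X != setT -> X \proper f X) ->
  iter #|T| f S = setT.
Proof.
move=> f_ext f_grow.
suff inv i : S \subset iter i f S /\ (iter i f S = setT \/ i <= #|iter i f S|).
  by have [_ [//|le]] := inv #|T|; apply/eqP; rewrite eqEcard subsetT cardsT.
elim: i => [|i [SX IH]] /=; first by split=> //; right.
set X := iter i f S in SX IH *.
split; first exact: subset_trans SX (f_ext X).
have [XT|XT] := eqVneq X setT.
  by left; apply/eqP; rewrite eqEsubset subsetT -{1}XT f_ext.
right; case: IH => [XT'|le]; first by rewrite XT' eqxx in XT.
exact: leq_ltn_trans le (proper_card (f_grow X SX XT)).
Qed.

Lemma force_step_sub X : X \subset force_step e X.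
Proof. exact: subsetUl. Qed.

Lemma unforced_neighbor X u v : v \notin force_step e X -> u \in X -> e u v ->
  exists2 w, e u w & (w \notin X) && (w != v).
Proof.
rewrite !inE negb_or => /andP [vX /existsPn /(_ u) nforce] uX uv.
move: nforce; rewrite uX vX uv /= => /forallPn [w].
by rewrite negb_imply negb_or => /andP [uw wXv]; exists w.
Qed.

End Forcing.

Section SmallConnectedComplement.
Variables (T : finType) (e : rel T) (g : nat) (W : {set T}).
Hypotheses (esym : symmetric e) (eirr : irreflexive e) (two : two_connected e).
Hypothesis girth_le : forall s, is_cycle e s -> g <= size s.
Hypotheses (connW : connected_on e W) (smallW : #|W| + 2 <= g).

Lemma outer_vertex_unique_neighbor x a b :
  x \notin W -> a \in W -> b \in W -> e x a -> e x b -> a = b.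
Proof.
move=> xW aW bW xa xb; apply/eqP/negPn/negP => ab.
have [s [cs sW]] := outer_vertex_cycle esym connW xW aW bW ab xa xb.
by have := cycle_size_le_card cs sW; have := girth_le cs; rewrite cardsU1 xW; lia.
Qed.

Lemma force_step_proper (X : {set T}) :
  ~: W \subset X -> X != setT -> X \proper force_step e X.
Proof.
move=> WX XT; apply/negPn/negP => stuck.
have fX v : v \notin X -> v \notin force_step e X.
  by move: stuck; rewrite properEneq force_step_sub andbT negbK => /eqP <-.
have inW u : u \notin X -> u \in W.
  by move=> uX; apply: contraR uX => uW; apply: (subsetP WX); rewrite inE.
have [v0 v0X] : exists v, v \notin X.
  apply/existsP; rewrite -negb_forall; apply: contra XT => /forallP Xall.
  by apply/eqP/setP => u; rewrite inE Xall.
(* If forcing stalls, every vertex of F has two neighbors in F. *)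
pose F := [set y in W | (y \notin X) || [exists v, (v \notin X) && e y v]].
have inF u : u \notin X -> u \in F by move=> uX; rewrite inE inW //= uX.
have [y|s [cs sF]] := min_degree2_cycle esym eirr (inF v0 v0X).
  rewrite inE => /andP [yW]; have [yX|yX] /= := boolP (y \in X).
    case/existsP => v /andP [vX yv].
    have [w yw /andP [wX wv]] := unforced_neighbor (fX v vX) yX yv.
    by exists v, w; split=> //; [exact: inF | exact: inF | rewrite eq_sym].
  move=> _; have [a [b [ab ya yb]]] := two_connected_deg2 eirr two y.
  suff nbF n : e y n -> n \in F by exists a, b; split=> //; apply: nbF.
  move=> yn; have [nX|] := boolP (n \in X); last exact: inF.
  have ny : e n y by rewrite esym.
  have [w nw /andP [wX wy]] := unforced_neighbor (fX y yX) nX ny.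
  have nW : n \in W.
    apply: contraR wy => nW; apply/eqP.
    exact: outer_vertex_unique_neighbor nW (inW w wX) (inW y yX) nw ny.
  by rewrite inE nW; apply/orP; right; apply/existsP; exists y; rewrite yX ny.
have FW : F \subset W by apply/subsetP => u; rewrite inE => /andP [].
have := subset_leq_card FW; have := girth_le cs.
by have := cycle_size_le_card cs sF; lia.
Qed.

Lemma complement_forcing_set : forcing_set e (~: W).
Proof. exact: iter_proper_setT (@force_step_sub _ e) force_step_proper. Qed.

End SmallConnectedComplement.

Unset Implicit Arguments.
Theorem theorem3 (T : finType) (e : rel T) (g : nat) :
  simple_graph e -> two_connected e -> is_girth e g ->
  exists S : {set T}, connected_forcing_set e S /\ #|S| <= #|T| - g + 2.
Proof.
move=> [esym eirr] two [[s [[s3 us _] sg]] girth_le].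
have gn : g <= #|T| by rewrite -sg -(card_uniqP us) max_card.
have [|W [cardW connW connC]] := connected_bipartition esym two (k := g - 2).
  by apply/andP; split; lia.
exists (~: W); split.
  by split=> //; apply: (complement_forcing_set esym eirr two girth_le connW); lia.
by have := cardsC W; lia.
Qed.
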